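(* Let $A$ be a unital $C^*$-algebra and let $a,b\in A$ be unitary. Then $a=b$ if and only if $\rho(a,b)=0$.
   Context: For $a,b\in A$ and $n\geq 0$ put $C_{a,b}^n\mathbf 1=\sum_{k=0}^n(-1)^k\binom{n}{k}a^{n-k}b^k$ (with $a^0=b^0=\mathbf 1$), and $\rho(a,b)=\limsup_{n\to\infty}\|C_{a,b}^n\mathbf 1\|^{1/n}$. *)

From Stdlib Require Import Reals.
Open Scope R_scope.

Record Cplx : Type := mkC { re : R ; im : R }.
Definition C0 : Cplx := mkC 0 0.
Definition C1 : Cplx := mkC 1 0.
Definition Cadd (z w : Cplx) : Cplx := mkC (re z + re w) (im z + im w).
Definition Cmul (z w : Cplx) : Cplx :=
  mkC (re z * re w - im z * im w) (re z * im w + im z * re w).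
Definition Cconj (z : Cplx) : Cplx := mkC (re z) (- im z).
Definition Cmod (z : Cplx) : R := sqrt (re z * re z + im z * im z).
Definition RtoC (r : R) : Cplx := mkC r 0.

Record CStarAlgebra : Type := {
  car :> Type;
  add : car -> car -> car;
  opp : car -> car;
  zero : car;
  mul : car -> car -> car;
  one : car;
  smul : Cplx -> car -> car;
  star : car -> car;
  norm : car -> R;
  addA : forall x y z, add x (add y z) = add (add x y) z;
  addC : forall x y, add x y = add y x;
  add0 : forall x, add zero x = x;
  addN : forall x, add (opp x) x = zero;
  smulA : forall c d x, smul c (smul d x) = smul (Cmul c d) x;
  smul1 : forall x, smul C1 x = x;
  smulDr : forall c x y, smul c (add x y) = add (smul c x) (smul c y);
  smulDl : forall c d x, smul (Cadd c d) x = add (smul c x) (smul d x);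
  mulA : forall x y z, mul x (mul y z) = mul (mul x y) z;
  mul1l : forall x, mul one x = x;
  mul1r : forall x, mul x one = x;
  mulDl : forall x y z, mul (add x y) z = add (mul x z) (mul y z);
  mulDr : forall x y z, mul x (add y z) = add (mul x y) (mul x z);
  smul_mull : forall c x y, smul c (mul x y) = mul (smul c x) y;
  smul_mulr : forall c x y, smul c (mul x y) = mul x (smul c y);
  starK : forall x, star (star x) = x;
  starD : forall x y, star (add x y) = add (star x) (star y);
  starZ : forall c x, star (smul c x) = smul (Cconj c) (star x);
  starM : forall x y, star (mul x y) = mul (star y) (star x);
  norm_ge0 : forall x, 0 <= norm x;
  norm_eq0 : forall x, norm x = 0 -> x = zero;
  norm_triangle : forall x y, norm (add x y) <= norm x + norm y;
  normZ : forall c x, norm (smul c x) = Cmod c * norm x;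
  norm_submul : forall x y, norm (mul x y) <= norm x * norm y;
  complete : forall u : nat -> car,
    (forall eps, 0 < eps -> exists N, forall m n, (N <= m)%nat -> (N <= n)%nat ->
        norm (add (u m) (opp (u n))) < eps) ->
    exists l, forall eps, 0 < eps -> exists N, forall n, (N <= n)%nat ->
        norm (add (u n) (opp l)) < eps;
  cstar_id : forall x, norm (mul (star x) x) = norm x * norm x
}.

Section Ops.
Variable A : CStarAlgebra.

Definition unitary (u : A) : Prop :=
  mul A (star A u) u = one A /\ mul A u (star A u) = one A.

Fixpoint powA (x : A) (n : nat) : A :=
  match n with O => one A | S m => mul A x (powA x m) end.

Fixpoint sumA (f : nat -> A) (n : nat) : A :=
  match n with O => f O | S m => add A (sumA f m) (f (S m)) end.

(** C_{a,b}^n 1 = sum_{k=0}^n (-1)^k binom(n,k) a^{n-k} b^k *)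
Definition Cab (a b : A) (n : nat) : A :=
  sumA (fun k => smul A (RtoC ((-1) ^ k * Binomial.C n k))
                       (mul A (powA a (n - k)) (powA b k))) n.
End Ops.

Definition nroot (x : R) (n : nat) : R :=
  if Req_EM_T x 0 then 0 else Rpower x (/ INR n).

Definition is_limsup (u : nat -> R) (l : R) : Prop :=
  (forall eps, 0 < eps -> exists N, forall n, (N <= n)%nat -> u n < l + eps) /\
  (forall eps, 0 < eps -> forall N, exists n, (N <= n)%nat /\ l - eps < u n).

Definition rho_is (A : CStarAlgebra) (a b : A) (l : R) : Prop :=
  is_limsup (fun n => nroot (norm A (Cab A a b n)) n) l.

From Pilot Require Import Defs.
From Stdlib Require Import Reals Lra Lia Psatz.
Open Scope R_scope.

(** The sequence [y_n = (star a)^n C^n_{a,b} 1] satisfies [y_0 = 1] and [y_(n+1) = y_n - T y_n]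
    for the isometry [T x = (star a) x b], and [rho(a,b) = 0] makes [||y_n||] decay faster than
    [r^-n] for every [r].  For [|w| = r] the truncated generating series
    [G(w) = sum_k (-1)^k w^(k+1) y_k] satisfies [(w+1) G - w T G = ] boundary terms of norm
    [<= 2r], and since [T] is an isometry this controls [||G(w)||] up to the factor
    [| |w+1| - r |].  Averaging over [w] at the scaled roots of unity (a discrete Cauchy
    formula) isolates [y_1] and yields [r^2 ||y_1|| <= 3 (2r + 1)] for all [r >= 1].
    Hence [y_1 = 1 - (star a) b = 0], i.e. [a = b]. *)

Lemma Cplx_eq (z w : Cplx) : re z = re w -> im z = im w -> z = w.
Proof. destruct z, w; simpl; intros; subst; reflexivity. Qed.

Definition Copp (z : Cplx) : Cplx := mkC (- re z) (- im z).
Definition Csub (z w : Cplx) : Cplx := Cadd z (Copp w).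

Lemma Cplx_ring : ring_theory C0 Defs.C1 Cadd Cmul Csub Copp (@eq Cplx).
Proof.
  constructor; intros; apply Cplx_eq; destruct x; try destruct y; try destruct z;
  unfold Cadd, Cmul, Csub, Copp, C0, Defs.C1; simpl; ring.
Qed.
Add Ring Cplx_ring : Cplx_ring.

Fixpoint Cpow (z : Cplx) (n : nat) : Cplx :=
  match n with O => Defs.C1 | S m => Cmul z (Cpow z m) end.

Fixpoint Csum (f : nat -> Cplx) (n : nat) : Cplx :=
  match n with O => f O | S m => Cadd (Csum f m) (f (S m)) end.

Lemma RtoC_add x y : RtoC (x + y) = Cadd (RtoC x) (RtoC y).
Proof. apply Cplx_eq; simpl; ring. Qed.

Lemma RtoC_mul x y : RtoC (x * y) = Cmul (RtoC x) (RtoC y).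
Proof. apply Cplx_eq; simpl; ring. Qed.

Lemma Cpow_mul z1 z2 m : Cpow (Cmul z1 z2) m = Cmul (Cpow z1 m) (Cpow z2 m).
Proof. induction m; simpl; [apply Cplx_eq; simpl; ring | rewrite IHm; ring]. Qed.

Lemma Cpow_RtoC x m : Cpow (RtoC x) m = RtoC (x ^ m).
Proof. induction m; simpl; [reflexivity | rewrite IHm, RtoC_mul; reflexivity]. Qed.

Lemma Cmod_ge0 z : 0 <= Cmod z.
Proof. apply sqrt_pos. Qed.

Lemma Cmod_sq z : Cmod z * Cmod z = re z * re z + im z * im z.
Proof. unfold Cmod; rewrite sqrt_sqrt; nra. Qed.

Lemma Cmod_mul z w : Cmod (Cmul z w) = Cmod z * Cmod w.
Proof. unfold Cmod; rewrite <- sqrt_mult by nra; f_equal; destruct z, w; simpl; ring. Qed.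

Lemma Cmod_RtoC x : Cmod (RtoC x) = Rabs x.
Proof. unfold Cmod; simpl; rewrite <- sqrt_Rsqr_abs; f_equal; unfold Rsqr; ring. Qed.

Lemma Cmod_pow z n : Cmod (Cpow z n) = Cmod z ^ n.
Proof.
  induction n; simpl.
  - rewrite <- Rabs_R1; apply Cmod_RtoC.
  - rewrite Cmod_mul, IHn; reflexivity.
Qed.

Lemma Cmul_integral z s : Cmul z s = C0 -> z <> C0 -> s = C0.
Proof.
  destruct z as [x y], s as [u v]; unfold Cmul; simpl; intros H Hz.
  injection H as H1 H2.
  assert (Hn : x * x + y * y <> 0).
  { intro E; apply Hz; assert (x = 0) by nra; assert (y = 0) by nra; subst; reflexivity. }
  assert (Eu : (x * x + y * y) * u = 0).
  { replace ((x * x + y * y) * u) with (x * (x * u - y * v) + y * (x * v + y * u)) by ring.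
    rewrite H1, H2; ring. }
  assert (Ev : (x * x + y * y) * v = 0).
  { replace ((x * x + y * y) * v) with (x * (x * v + y * u) - y * (x * u - y * v)) by ring.
    rewrite H1, H2; ring. }
  apply Rmult_integral in Eu; apply Rmult_integral in Ev.
  destruct Eu as [Eu|Eu]; [contradiction|]; destruct Ev as [Ev|Ev]; [contradiction|].
  subst; reflexivity.
Qed.

Lemma Csum_ext f g n : (forall k, (k <= n)%nat -> f k = g k) -> Csum f n = Csum g n.
Proof.
  induction n; intro H; simpl; [apply H; lia|].
  rewrite IHn, H by (intros; try apply H; lia); reflexivity.
Qed.

Lemma Csum_add f g n : Csum (fun k => Cadd (f k) (g k)) n = Cadd (Csum f n) (Csum g n).
Proof. induction n; simpl; [reflexivity | rewrite IHn; ring]. Qed.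

Lemma Csum_mull c f n : Csum (fun k => Cmul c (f k)) n = Cmul c (Csum f n).
Proof. induction n; simpl; [reflexivity | rewrite IHn; ring]. Qed.

Lemma Csum_const c n : Csum (fun _ => c) n = Cmul (RtoC (INR (S n))) c.
Proof.
  induction n; simpl Csum; [apply Cplx_eq; simpl; ring|].
  rewrite IHn, (S_INR (S n)); apply Cplx_eq; simpl; ring.
Qed.

Definition cis (t : R) : Cplx := mkC (cos t) (sin t).

Lemma cis_add s t : cis (s + t) = Cmul (cis s) (cis t).
Proof. apply Cplx_eq; simpl; rewrite ?cos_plus, ?sin_plus; ring. Qed.

Lemma cis_pow t m : Cpow (cis t) m = cis (INR m * t).
Proof.
  induction m; simpl Cpow.
  - apply Cplx_eq; simpl; rewrite Rmult_0_l, ?cos_0, ?sin_0; reflexivity.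
  - rewrite IHm, <- cis_add, S_INR; f_equal; ring.
Qed.

Lemma Cmod_cis_mul r t : Cmod (Cmul (RtoC r) (cis t)) = Rabs r.
Proof.
  rewrite Cmod_mul, Cmod_RtoC; unfold Cmod, cis; simpl.
  rewrite (Rplus_comm (cos t * cos t)), <- !Rsqr_def, sin2_cos2, sqrt_1; ring.
Qed.

Lemma cis_sub1_neq0 t : 0 < t < 2 * PI -> Csub (cis t) Defs.C1 <> C0.
Proof.
  intros Ht E.
  assert (Hs : sin t = 0) by (injection E; intros; lra).
  assert (Hc : cos t = 1) by (injection E; intros; lra).
  destruct (sin_eq_0_0 t Hs) as [k ->].
  assert (Hpi := PI_RGT_0).
  assert (Hk0 : (0 < k)%Z) by (apply lt_IZR; destruct Ht; nra).
  assert (Hk2 : (k < 2)%Z) by (apply lt_IZR; destruct Ht; nra).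
  replace k with 1%Z in Hc by lia.
  rewrite Rmult_1_l, cos_PI in Hc; lra.
Qed.

Lemma Csum_geometric_cis t K :
  Cmul (Csub (cis t) Defs.C1) (Csum (fun j => cis (INR j * t)) K) =
  Csub (cis (INR (S K) * t)) Defs.C1.
Proof.
  induction K; cbn [Csum].
  - unfold cis; simpl INR; rewrite Rmult_0_l, Rmult_1_l, cos_0, sin_0.
    apply Cplx_eq; simpl; ring.
  - transitivity (Cadd (Cmul (Csub (cis t) Defs.C1) (Csum (fun j => cis (INR j * t)) K))
                       (Csub (Cmul (cis t) (cis (INR (S K) * t))) (cis (INR (S K) * t))));
      [ring|].
    rewrite IHK, <- cis_add, (S_INR (S K)), Rplus_comm, Rmult_plus_distr_r, Rmult_1_l; ring.
Qed.

Definition root_angle (M : nat) : R := 2 * PI / INR M.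

Lemma roots_of_unity_sum (M m : nat) : (1 <= m < M)%nat ->
  Csum (fun j => cis (INR j * (INR m * root_angle M))) (M - 1) = C0.
Proof.
  intros Hm; set (t := INR m * root_angle M).
  assert (HM : 0 < INR M) by (apply lt_0_INR; lia).
  assert (Hpi := PI_RGT_0).
  assert (Ht : 0 < t < 2 * PI).
  { assert (1 <= INR m) by (apply (le_INR 1); lia).
    assert (INR m < INR M) by (apply lt_INR; lia).
    unfold t, root_angle; replace (INR m * (2 * PI / INR M)) with (2 * PI * (INR m / INR M))
      by (field; lra).
    split; [apply Rmult_lt_0_compat; [lra | apply Rdiv_lt_0_compat; lra]|].
    rewrite <- (Rmult_1_r (2 * PI)) at 2; apply Rmult_lt_compat_l; [lra|].
    apply (Rmult_lt_reg_r (INR M)); [lra|]; unfold Rdiv; rewrite Rmult_assoc, Rinv_l; lra. }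
  apply (Cmul_integral (Csub (cis t) Defs.C1)); [|apply cis_sub1_neq0, Ht].
  rewrite Csum_geometric_cis; replace (S (M - 1)) with M by lia.
  replace (INR M * t) with (0 + 2 * INR m * PI) by (unfold t, root_angle; field; lra).
  unfold cis; rewrite cos_period, sin_period, cos_0, sin_0; apply Cplx_eq; simpl; ring.
Qed.

Definition root_point (r : R) (M j : nat) : Cplx := Cmul (RtoC r) (cis (INR j * root_angle M)).

Definition root_power_sum (r : R) (M m : nat) : Cplx :=
  Csum (fun j => Cpow (root_point r M j) m) (M - 1).

Lemma root_power_sum_0 r M : (1 <= M)%nat -> root_power_sum r M 0 = RtoC (INR M).
Proof.
  intro HM; unfold root_power_sum; simpl Cpow; rewrite Csum_const.
  replace (S (M - 1)) with M by lia; apply Cplx_eq; simpl; ring.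
Qed.

Lemma root_power_sum_eq0 r M m : (1 <= m < M)%nat -> root_power_sum r M m = C0.
Proof.
  intro Hm; unfold root_power_sum.
  rewrite (Csum_ext _ (fun j => Cmul (RtoC (r ^ m)) (cis (INR j * (INR m * root_angle M))))).
  - rewrite Csum_mull, roots_of_unity_sum by assumption; ring.
  - intros j _; unfold root_point; rewrite Cpow_mul, Cpow_RtoC, cis_pow; do 2 f_equal; ring.
Qed.

Lemma Cmod_root_point r M j : 0 <= r -> Cmod (root_point r M j) = r.
Proof. intro Hr; unfold root_point; rewrite Cmod_cis_mul; apply Rabs_right; lra. Qed.
Section Algebra.
Variable A : CStarAlgebra.

Lemma add0r (x : A) : add A x (zero A) = x.
Proof. rewrite addC; apply add0. Qed.

Lemma addNr (x : A) : add A x (opp A x) = zero A.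
Proof. rewrite addC; apply addN. Qed.

Lemma addrI (x y z : A) : add A x y = add A x z -> y = z.
Proof.
  intro H; rewrite <- (add0 A y), <- (add0 A z), <- (addN A x), <- !addA, H; reflexivity.
Qed.

Lemma subr0_eq (x y : A) : add A x (opp A y) = zero A -> x = y.
Proof. intro H; apply (addrI (opp A y)); rewrite addN, addC; exact H. Qed.

Lemma smul0 (x : A) : smul A C0 x = zero A.
Proof.
  apply (addrI (smul A C0 x)); rewrite <- smulDl, add0r; f_equal; apply Cplx_eq; simpl; ring.
Qed.

Lemma opp_smul (x : A) : opp A x = smul A (RtoC (-1)) x.
Proof.
  apply (addrI x); rewrite addNr, <- (smul0 x).
  transitivity (add A (smul A Defs.C1 x) (smul A (RtoC (-1)) x)); [|rewrite smul1; reflexivity].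
  rewrite <- smulDl; f_equal; apply Cplx_eq; simpl; ring.
Qed.

Lemma smul_opp c (x : A) : smul A c (opp A x) = opp A (smul A c x).
Proof. rewrite !opp_smul, !smulA; f_equal; ring. Qed.

Lemma opp_add (x y : A) : opp A (add A x y) = add A (opp A x) (opp A y).
Proof. rewrite !opp_smul; apply smulDr. Qed.

Lemma oppK (x : A) : opp A (opp A x) = x.
Proof.
  rewrite !opp_smul, smulA; transitivity (smul A Defs.C1 x); [|apply smul1].
  f_equal; apply Cplx_eq; simpl; ring.
Qed.

Lemma addKr (x y : A) : add A (opp A x) (add A x y) = y.
Proof. rewrite addA, addN; apply add0. Qed.

Lemma addNKr (x y : A) : add A x (add A (opp A x) y) = y.
Proof. rewrite addA, addNr; apply add0. Qed.

Lemma mul0r (x : A) : mul A x (zero A) = zero A.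
Proof. apply (addrI (mul A x (zero A))); rewrite <- mulDr, add0, add0r; reflexivity. Qed.

Lemma mul0l (x : A) : mul A (zero A) x = zero A.
Proof. apply (addrI (mul A (zero A) x)); rewrite <- mulDl, add0, add0r; reflexivity. Qed.

Lemma mulrN (x y : A) : mul A x (opp A y) = opp A (mul A x y).
Proof. rewrite !opp_smul, smul_mulr; reflexivity. Qed.

Lemma norm_zero : norm A (zero A) = 0.
Proof. rewrite <- (smul0 (zero A)), normZ; change C0 with (RtoC 0); rewrite Cmod_RtoC, Rabs_R0; ring. Qed.

Lemma norm_opp (x : A) : norm A (opp A x) = norm A x.
Proof. rewrite opp_smul, normZ, Cmod_RtoC, Rabs_left by lra; ring. Qed.

Lemma norm_add_ge (x y : A) : norm A y - norm A x <= norm A (add A x y).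
Proof.
  assert (H := norm_triangle A (add A x y) (opp A x)).
  rewrite norm_opp, addC, addA, addN, add0 in H; lra.
Qed.

Lemma norm_sub_ge (x y : A) : Rabs (norm A x - norm A y) <= norm A (add A x (opp A y)).
Proof.
  assert (Hx := norm_add_ge (opp A y) x); assert (Hy := norm_add_ge x (opp A y)).
  rewrite norm_opp, addC in Hx; rewrite norm_opp in Hy.
  apply Rabs_le; lra.
Qed.

Lemma sumA_ext (f g : nat -> A) n :
  (forall k, (k <= n)%nat -> f k = g k) -> sumA A f n = sumA A g n.
Proof.
  induction n; intro H; simpl; [apply H; lia|].
  rewrite IHn, H by (intros; try apply H; lia); reflexivity.
Qed.

Lemma sumA_add (f g : nat -> A) n :
  sumA A (fun k => add A (f k) (g k)) n = add A (sumA A f n) (sumA A g n).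
Proof.
  induction n; simpl; [reflexivity|].
  rewrite IHn, <- !addA; f_equal; rewrite !addA; f_equal; apply addC.
Qed.

Lemma sumA_opp (f : nat -> A) n : opp A (sumA A f n) = sumA A (fun k => opp A (f k)) n.
Proof. induction n; simpl; [reflexivity | rewrite opp_add, IHn; reflexivity]. Qed.

Lemma sumA_smul c (f : nat -> A) n :
  smul A c (sumA A f n) = sumA A (fun k => smul A c (f k)) n.
Proof. induction n; simpl; [reflexivity | rewrite smulDr, IHn; reflexivity]. Qed.

Lemma sumA_mull (x : A) f n : mul A x (sumA A f n) = sumA A (fun k => mul A x (f k)) n.
Proof. induction n; simpl; [reflexivity | rewrite mulDr, IHn; reflexivity]. Qed.

Lemma sumA_mulr (x : A) f n : mul A (sumA A f n) x = sumA A (fun k => mul A (f k) x) n.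
Proof. induction n; simpl; [reflexivity | rewrite mulDl, IHn; reflexivity]. Qed.

Lemma sumA_smull (f : nat -> Cplx) (x : A) n :
  sumA A (fun j => smul A (f j) x) n = smul A (Csum f n) x.
Proof. induction n; simpl; [reflexivity | rewrite IHn, smulDl; reflexivity]. Qed.

Lemma sumA_recl (f : nat -> A) n :
  sumA A f (S n) = add A (f 0%nat) (sumA A (fun k => f (S k)) n).
Proof.
  induction n; [reflexivity|].
  change (sumA A f (S (S n))) with (add A (sumA A f (S n)) (f (S (S n)))).
  rewrite IHn; simpl; rewrite addA; reflexivity.
Qed.

Lemma sumA_eq0 (f : nat -> A) n :
  (forall k, (k <= n)%nat -> f k = zero A) -> sumA A f n = zero A.
Proof.
  induction n; intro H; simpl; [apply H; lia|].
  rewrite IHn, H by (intros; try apply H; lia); apply add0.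
Qed.

Lemma sumA_telescope (u : nat -> A) n :
  sumA A (fun k => add A (u k) (opp A (u (S k)))) n = add A (u 0%nat) (opp A (u (S n))).
Proof.
  induction n; simpl; [reflexivity|].
  rewrite IHn, <- !addA, addKr; reflexivity.
Qed.

Lemma sumA_exchange (F : nat -> nat -> A) m n :
  sumA A (fun j => sumA A (F j) n) m = sumA A (fun k => sumA A (fun j => F j k) m) n.
Proof. induction m; simpl; [reflexivity | rewrite IHm, <- sumA_add; reflexivity]. Qed.

Lemma norm_sumA_le (f : nat -> A) n B :
  (forall k, (k <= n)%nat -> norm A (f k) <= B) -> norm A (sumA A f n) <= INR (S n) * B.
Proof.
  induction n; intro H; simpl sumA; [rewrite Rmult_1_l; apply H; lia|].
  eapply Rle_trans; [apply norm_triangle|].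
  assert (H1 := IHn (fun k Hk => H k ltac:(lia))); assert (H2 := H (S n) ltac:(lia)).
  rewrite (S_INR (S n)); lra.
Qed.

Lemma powA_Sr (x : A) n : powA A x (S n) = mul A (powA A x n) x.
Proof.
  induction n; [simpl; rewrite mul1l, mul1r; reflexivity|].
  change (powA A x (S (S n))) with (mul A x (powA A x (S n))).
  rewrite IHn at 1; apply mulA.
Qed.

End Algebra.

Section Unitaries.
Variable A : CStarAlgebra.

Lemma star_one : star A (one A) = one A.
Proof.
  rewrite <- (mul1r A (star A (one A))), <- (starK A (mul A (star A (one A)) (one A))).
  rewrite starM, starK, mul1r; apply starK.
Qed.

Lemma norm_one_le1 : norm A (one A) <= 1.
Proof.
  assert (H := cstar_id A (one A)); rewrite star_one, mul1l in H.
  assert (H0 := norm_ge0 A (one A)); nra.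
Qed.

Lemma unitary_norm_le1 (u : A) : unitary A u -> norm A u <= 1.
Proof.
  intros [Hu _]; assert (H := cstar_id A u); rewrite Hu in H.
  assert (H0 := norm_ge0 A u); assert (H1 := norm_one_le1); nra.
Qed.

Lemma unitary_star (u : A) : unitary A u -> unitary A (star A u).
Proof. intros [H1 H2]; split; rewrite starK; assumption. Qed.

Lemma norm_mull_le (u x : A) : norm A u <= 1 -> norm A (mul A u x) <= norm A x.
Proof.
  intro H; eapply Rle_trans; [apply norm_submul|].
  assert (H0 := norm_ge0 A u); assert (H1 := norm_ge0 A x); nra.
Qed.

Lemma norm_mulr_le (u x : A) : norm A u <= 1 -> norm A (mul A x u) <= norm A x.
Proof.
  intro H; eapply Rle_trans; [apply norm_submul|].
  assert (H0 := norm_ge0 A u); assert (H1 := norm_ge0 A x); nra.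
Qed.

Lemma unitary_powA_norm_le1 (u : A) n : unitary A u -> norm A (powA A u n) <= 1.
Proof.
  intro Hu; induction n; simpl; [apply norm_one_le1|].
  eapply Rle_trans; [apply norm_mull_le, unitary_norm_le1, Hu | exact IHn].
Qed.

Lemma norm_unitary_conj (a b x : A) : unitary A a -> unitary A b ->
  norm A (mul A (mul A (star A a) x) b) = norm A x.
Proof.
  intros Ha Hb; apply Rle_antisym.
  - eapply Rle_trans; [apply norm_mulr_le, unitary_norm_le1, Hb|].
    apply norm_mull_le, unitary_norm_le1, unitary_star, Ha.
  - assert (E : x = mul A (mul A a (mul A (mul A (star A a) x) b)) (star A b)).
    { destruct Ha as [_ Ha], Hb as [_ Hb].
      rewrite <- !mulA, Hb, mul1r, !mulA, Ha, mul1l; reflexivity. }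
    rewrite E at 1; eapply Rle_trans; [apply norm_mulr_le, unitary_norm_le1, unitary_star, Hb|].
    apply norm_mull_le, unitary_norm_le1, Ha.
Qed.

End Unitaries.

Section CabRecursion.
Variables (A : CStarAlgebra) (a b : A).

Definition signed_binom (n k : nat) : R := if (k <=? n)%nat then (-1) ^ k * Binomial.C n k else 0.

Lemma binomial_n_0 n : Binomial.C n 0 = 1.
Proof. unfold Binomial.C; rewrite Nat.sub_0_r; simpl; field; apply INR_fact_neq_0. Qed.

Lemma binomial_n_n n : Binomial.C n n = 1.
Proof. rewrite pascal_step1, Nat.sub_diag by lia; apply binomial_n_0. Qed.

Lemma signed_binom_0 n : signed_binom n 0 = 1.
Proof. unfold signed_binom; simpl; rewrite binomial_n_0; ring. Qed.

Lemma signed_binom_pascal n k :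
  signed_binom (S n) (S k) = signed_binom n (S k) - signed_binom n k.
Proof.
  unfold signed_binom.
  destruct (Nat.leb_spec (S k) (S n)), (Nat.leb_spec (S k) n), (Nat.leb_spec k n); try lia.
  - rewrite <- pascal by lia; simpl; ring.
  - replace k with n by lia; rewrite !binomial_n_n; simpl; ring.
  - ring.
Qed.

Definition mixed_pow (n k : nat) : A := mul A (powA A a (n - k)) (powA A b k).

Lemma Cab_signed_binom n :
  Cab A a b n = sumA A (fun k => smul A (RtoC (signed_binom n k)) (mixed_pow n k)) n.
Proof.
  apply sumA_ext; intros k Hk.
  unfold signed_binom; destruct (Nat.leb_spec k n); [reflexivity | lia].
Qed.

Lemma Cab_succ n :
  Cab A a b (S n) = add A (mul A a (Cab A a b n)) (opp A (mul A (Cab A a b n) b)).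
Proof.
  set (t m k := smul A (RtoC (signed_binom m k)) (mixed_pow (S n) k)).
  assert (Ea : mul A a (Cab A a b n) = sumA A (t n) (S n)).
  { rewrite Cab_signed_binom, sumA_mull; simpl sumA.
    unfold t at 2, signed_binom at 2; destruct (Nat.leb_spec (S n) n); [lia|].
    change (RtoC 0) with C0; rewrite smul0, add0r.
    apply sumA_ext; intros k Hk; unfold t, mixed_pow.
    rewrite <- smul_mulr, mulA; replace (S n - k)%nat with (S (n - k)) by lia; reflexivity. }
  assert (Eb : mul A (Cab A a b n) b =
               sumA A (fun k => smul A (RtoC (signed_binom n k)) (mixed_pow (S n) (S k))) n).
  { rewrite Cab_signed_binom, sumA_mulr; apply sumA_ext; intros k Hk; unfold mixed_pow.
    rewrite <- smul_mull, <- mulA, <- powA_Sr; reflexivity. }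
  rewrite Ea, Eb, Cab_signed_binom, !sumA_recl, <- addA, sumA_opp, <- sumA_add.
  unfold t; rewrite !signed_binom_0; f_equal; apply sumA_ext; intros k Hk.
  rewrite signed_binom_pascal; unfold Rminus.
  rewrite RtoC_add, smulDl, opp_smul, smulA; do 3 f_equal; apply Cplx_eq; simpl; ring.
Qed.

Lemma Cab_0 : Cab A a b 0 = one A.
Proof.
  unfold Cab; simpl sumA; rewrite binomial_n_0; simpl.
  replace (RtoC (1 * 1)) with Defs.C1 by (apply Cplx_eq; simpl; ring).
  rewrite smul1; apply mul1l.
Qed.

End CabRecursion.

Lemma Cab_diag_succ (A : CStarAlgebra) (a : A) n : Cab A a a (S n) = zero A.
Proof.
  induction n; rewrite Cab_succ.
  - rewrite Cab_0, mul1l, mul1r; apply addNr.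
  - rewrite IHn, mul0r, mul0l; apply addNr.
Qed.

(** Used with [s = |w+1|], [x = Re w], [g = ||G(w)||], [d = ||D(w)||], [n0 = ||y_0||];
    the key relation is [|2x+1| = |s - r| (s + r)]. *)
Lemma point_estimate_real (r s x g d n0 : R) :
  1 <= r -> 0 <= s -> 0 <= g -> 0 <= d -> 0 <= n0 <= 1 -> x * x <= r * r ->
  s * s = r * r + (2 * x + 1) ->
  Rabs (s - r) * g <= 2 * r -> r * r * d - r * n0 <= g ->
  r * Rabs (2 * x + 1) * d <= 3 * (2 * r + 1).
Proof.
  intros Hr Hs Hg Hd Hn0 Hx Hs2 Hsg Hdg.
  assert (Ht : Rabs (2 * x + 1) <= 2 * r + 1) by (apply Rabs_le; split; nra).
  assert (Hxr : x <= r) by nra.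
  assert (Hsr : s <= r + 1).
  { destruct (Rle_dec s (r + 1)) as [|Hc]; [assumption|].
    assert ((r + 1) * (r + 1) < s * s) by (apply Rmult_le_0_lt_compat; lra); lra. }
  assert (Hts : Rabs (2 * x + 1) = Rabs (s - r) * (s + r)).
  { replace (2 * x + 1) with ((s - r) * (s + r)) by nra.
    rewrite Rabs_mult, (Rabs_right (s + r)) by lra; reflexivity. }
  assert (Htg : Rabs (2 * x + 1) * g <= 2 * r * (2 * r + 1)).
  { rewrite Hts; assert (0 <= Rabs (s - r)) by apply Rabs_pos; nra. }
  assert (Ht0 : 0 <= Rabs (2 * x + 1)) by apply Rabs_pos.
  assert (H1 : Rabs (2 * x + 1) * (r * r * d) <= Rabs (2 * x + 1) * (g + r * n0))
    by (apply Rmult_le_compat_l; lra).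
  assert (H2 : Rabs (2 * x + 1) * n0 <= 2 * r + 1) by nra.
  apply Rmult_le_reg_l with r; [lra|]; nra.
Qed.

Definition sgn (k : nat) : Cplx := RtoC ((-1) ^ k).

Lemma Cmod_sgn k : Cmod (sgn k) = 1.
Proof. unfold sgn; rewrite Cmod_RtoC; apply pow_1_abs. Qed.

Lemma smul_resolvent (A : CStarAlgebra) (w : Cplx) (x z : A) :
  add A (smul A (Cadd w Defs.C1) x) (opp A (smul A w (add A x (opp A z)))) =
  add A x (smul A w z).
Proof.
  rewrite smulDl, smul1, smulDr, smul_opp, opp_add, oppK, (addC A (smul A w x)), <- addA.
  f_equal; apply addNKr.
Qed.

Section IsometryOrbit.
Variables (A : CStarAlgebra) (T : A -> A).
Hypothesis T_add : forall x z, T (add A x z) = add A (T x) (T z).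
Hypothesis T_smul : forall c x, T (smul A c x) = smul A c (T x).
Hypothesis norm_T : forall x, norm A (T x) = norm A x.
Variable y : nat -> A.
Hypothesis y_succ : forall k, y (S k) = add A (y k) (opp A (T (y k))).

Lemma T_sumA f n : T (sumA A f n) = sumA A (fun k => T (f k)) n.
Proof. induction n; simpl; [reflexivity | rewrite T_add, IHn; reflexivity]. Qed.

Lemma T_orbit k : T (y k) = add A (y k) (opp A (y (S k))).
Proof. rewrite y_succ, opp_add, oppK, addNKr; reflexivity. Qed.

(** Truncations of the generating series [G(w) = sum_k (-1)^k w^(k+1) y_k] of the orbit
    and of [D(w) = sum_k (-1)^(k+1) w^k y_(k+1)], so that [G = w y_0 + w^2 D]. *)
Definition gen_term (w : Cplx) (k : nat) : A := smul A (Cmul (sgn k) (Cpow w (S k))) (y k).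
Definition gen_sum (w : Cplx) (N : nat) : A := sumA A (gen_term w) (S N).
Definition gen_tail (w : Cplx) (N : nat) : A :=
  sumA A (fun k => smul A (Cmul (sgn (S k)) (Cpow w k)) (y (S k))) N.

Lemma gen_sum_split w N :
  gen_sum w N = add A (smul A w (y 0%nat)) (smul A (Cmul w w) (gen_tail w N)).
Proof.
  unfold gen_sum, gen_tail; rewrite sumA_recl, sumA_smul; f_equal.
  - unfold gen_term; f_equal; apply Cplx_eq; simpl; ring.
  - apply sumA_ext; intros k _; unfold gen_term; rewrite smulA; f_equal.
    apply Cplx_eq; simpl; ring.
Qed.

Lemma gen_sum_resolvent w N :
  add A (smul A (Cadd w Defs.C1) (gen_sum w N)) (opp A (smul A w (T (gen_sum w N)))) =
  add A (gen_term w 0%nat) (opp A (gen_term w (S (S N)))).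
Proof.
  unfold gen_sum; rewrite T_sumA, !sumA_smul, sumA_opp, <- sumA_add, <- sumA_telescope.
  apply sumA_ext; intros k _; unfold gen_term at 1 2.
  rewrite T_smul, T_orbit, smulDr, smul_opp, smul_resolvent.
  unfold gen_term; f_equal; rewrite opp_smul, !smulA; f_equal.
  unfold sgn; apply Cplx_eq; simpl; ring.
Qed.

Lemma resolvent_norm_ge (w : Cplx) (x : A) :
  Rabs (Cmod (Cadd w Defs.C1) - Cmod w) * norm A x <=
  norm A (add A (smul A (Cadd w Defs.C1) x) (opp A (smul A w (T x)))).
Proof.
  eapply Rle_trans; [|apply norm_sub_ge].
  rewrite !normZ, norm_T, <- Rmult_minus_distr_r, Rabs_mult, (Rabs_right (norm A x));
    [lra | apply Rle_ge, norm_ge0].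
Qed.

(** Averaging [(w^2 + w + r^2) D(w)] over the points [w] of modulus [r] at the
    [M]-th roots of unity keeps only the [w^0] coefficient of [r^2 D(w)], namely [-r^2 y_1]. *)
Lemma gen_tail_average r N :
  sumA A (fun j => smul A (Cadd (Cadd (Cmul (root_point r (N + 3) j) (root_point r (N + 3) j))
                                   (root_point r (N + 3) j)) (RtoC (r * r)))
                       (gen_tail (root_point r (N + 3) j) N)) (N + 2) =
  smul A (RtoC (- (INR (N + 3) * (r * r)))) (y 1%nat).
Proof.
  set (M := (N + 3)%nat); set (P := root_power_sum r M).
  replace (N + 2)%nat with (M - 1)%nat by (unfold M; lia).
  unfold gen_tail.
  rewrite (sumA_ext _ _ (fun j => sumA A (fun k => smul A
      (Cmul (Cadd (Cadd (Cmul (root_point r M j) (root_point r M j)) (root_point r M j))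
                   (RtoC (r * r)))
            (Cmul (sgn (S k)) (Cpow (root_point r M j) k))) (y (S k))) N)).
  2: { intros j _; rewrite sumA_smul; apply sumA_ext; intros k _; apply smulA. }
  rewrite sumA_exchange.
  rewrite (sumA_ext _ _ (fun k => smul A (Cmul (sgn (S k))
      (Cadd (Cadd (P (S (S k))) (P (S k))) (Cmul (RtoC (r * r)) (P k)))) (y (S k)))).
  2: { intros k _; rewrite sumA_smull; f_equal; unfold P, root_power_sum.
       rewrite <- Csum_mull, <- !Csum_add, <- Csum_mull; apply Csum_ext; intros j _.
       simpl Cpow; ring. }
  destruct N as [|N'].
  - simpl sumA; unfold P; rewrite !root_power_sum_eq0, root_power_sum_0 by (unfold M; lia).
    f_equal; apply Cplx_eq; simpl; ring.
  - rewrite sumA_recl, sumA_eq0, add0r.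
    + unfold P; rewrite !root_power_sum_eq0, root_power_sum_0 by (unfold M; lia).
      f_equal; apply Cplx_eq; simpl; ring.
    + intros k Hk; unfold P; rewrite !root_power_sum_eq0 by (unfold M; lia).
      replace (Cmul _ _) with C0 by ring; apply smul0.
Qed.

Section Decay.
Variables (r : R) (N : nat).
Hypothesis r_ge1 : 1 <= r.
Hypothesis y0_le1 : norm A (y 0%nat) <= 1.
Hypothesis y_decay : r ^ (S (S N)) * norm A (y (S (S N))) <= 1.

Lemma gen_sum_resolvent_le (w : Cplx) : Cmod w = r ->
  norm A (add A (smul A (Cadd w Defs.C1) (gen_sum w N)) (opp A (smul A w (T (gen_sum w N)))))
  <= 2 * r.
Proof.
  intro Hw; rewrite gen_sum_resolvent.
  eapply Rle_trans; [apply norm_triangle|]; rewrite norm_opp; unfold gen_term.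
  rewrite !normZ, !Cmod_mul, !Cmod_sgn, !Cmod_pow, Hw, pow_1, !Rmult_1_l.
  replace (r ^ S (S (S N)) * norm A (y (S (S N)))) with
    (r * (r ^ S (S N) * norm A (y (S (S N))))) by (simpl; ring).
  assert (H0 := norm_ge0 A (y 0%nat)); nra.
Qed.

Lemma gen_tail_estimate (w : Cplx) : Cmod w = r ->
  norm A (smul A (Cadd (Cadd (Cmul w w) w) (RtoC (r * r))) (gen_tail w N)) <= 3 * (2 * r + 1).
Proof.
  intro Hw.
  assert (Hw2 : re w * re w + im w * im w = r * r) by (rewrite <- Cmod_sq, Hw; reflexivity).
  replace (Cadd (Cadd (Cmul w w) w) (RtoC (r * r))) with (Cmul w (RtoC (2 * re w + 1)))
    by (apply Cplx_eq; simpl; nra).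
  rewrite normZ, Cmod_mul, Hw, Cmod_RtoC.
  apply (point_estimate_real r (Cmod (Cadd w Defs.C1)) (re w) (norm A (gen_sum w N)) _
           (norm A (y 0%nat))); try apply norm_ge0; try apply Cmod_ge0; try lra.
  - split; [apply norm_ge0 | exact y0_le1].
  - nra.
  - rewrite Cmod_sq; simpl; nra.
  - rewrite <- Hw at 1; eapply Rle_trans; [apply resolvent_norm_ge|].
    apply gen_sum_resolvent_le, Hw.
  - rewrite gen_sum_split; eapply Rle_trans; [|apply norm_add_ge].
    rewrite !normZ, Cmod_mul, Hw; lra.
Qed.

Lemma orbit_succ0_estimate : r * r * norm A (y 1%nat) <= 3 * (2 * r + 1).
Proof.
  assert (Hsum := norm_sumA_le A _ (N + 2) (3 * (2 * r + 1))
    (fun j _ => gen_tail_estimate (root_point r (N + 3) j)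
                  (Cmod_root_point r (N + 3) j ltac:(lra)))).
  rewrite gen_tail_average, normZ, Cmod_RtoC, Rabs_left1, Ropp_involutive in Hsum.
  - replace (S (N + 2)) with (N + 3)%nat in Hsum by lia.
    assert (HM : 0 < INR (N + 3)) by (apply lt_0_INR; lia).
    apply Rmult_le_reg_l with (INR (N + 3)); nra.
  - assert (0 < INR (N + 3)) by (apply lt_0_INR; lia); nra.
Qed.

End Decay.

Lemma orbit_succ0_eq0 : norm A (y 0%nat) <= 1 ->
  (forall r, 1 <= r -> exists N, r ^ (S (S N)) * norm A (y (S (S N))) <= 1) ->
  y 1%nat = zero A.
Proof.
  intros Hy0 Hdecay; apply norm_eq0.
  set (c := norm A (y 1%nat)); assert (Hc : 0 <= c) by apply norm_ge0.
  destruct (Req_dec c 0) as [|Hc0]; [assumption | exfalso].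
  set (r := 9 / c + 1).
  assert (Hr : 1 <= r) by (unfold r; assert (0 < 9 / c) by (apply Rdiv_lt_0_compat; lra); lra).
  destruct (Hdecay r Hr) as [N HN].
  assert (Hbound := orbit_succ0_estimate r N Hr Hy0 HN); fold c in Hbound.
  assert (Hrc : r * c = 9 + c) by (unfold r; field; lra).
  nra.
Qed.

End IsometryOrbit.

Lemma nroot_ge0 x n : 0 <= nroot x n.
Proof. unfold nroot; destruct (Req_EM_T x 0); [lra | left; apply exp_pos]. Qed.

Lemma nroot_0 n : nroot 0 n = 0.
Proof. unfold nroot; destruct (Req_EM_T 0 0); [reflexivity | congruence]. Qed.

Lemma le_pow_of_nroot_lt x n e : 0 <= x -> (1 <= n)%nat -> nroot x n < e -> x <= e ^ n.
Proof.
  intros Hx Hn; unfold nroot; destruct (Req_EM_T x 0) as [->|Hx0]; intro H.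
  - apply pow_le; lra.
  - assert (Hr : 0 < Rpower x (/ INR n)) by apply exp_pos.
    replace x with (Rpower x (/ INR n) ^ n).
    + apply pow_incr; lra.
    + rewrite <- Rpower_pow, Rpower_mult, Rinv_l, Rpower_1 by (try apply not_0_INR; lia || lra).
      reflexivity.
Qed.

Lemma is_limsup_eventually0 (u : nat -> R) :
  (forall n, 0 <= u n) -> (exists N, forall n, (N <= n)%nat -> u n = 0) -> is_limsup u 0.
Proof.
  intros Hu [N HN]; split.
  - intros eps Heps; exists N; intros n Hn; rewrite HN by exact Hn; lra.
  - intros eps Heps M; exists M; split; [lia|]; specialize (Hu M); lra.
Qed.

Lemma nroot_limsup0_decay (u : nat -> R) : (forall n, 0 <= u n) ->
  (forall eps, 0 < eps -> exists N, forall n, (N <= n)%nat -> nroot (u n) n < 0 + eps) ->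
  forall r, 0 < r -> exists N, r ^ (S (S N)) * u (S (S N)) <= 1.
Proof.
  intros Hu Hlim r Hr; destruct (Hlim (/ r)) as [N HN]; [apply Rinv_0_lt_compat, Hr|].
  exists N; assert (H := HN (S (S N)) ltac:(lia)); rewrite Rplus_0_l in H.
  apply le_pow_of_nroot_lt in H; [|apply Hu | lia].
  apply Rle_trans with (r ^ S (S N) * (/ r) ^ S (S N)).
  - apply Rmult_le_compat_l; [apply pow_le; lra | exact H].
  - rewrite <- Rpow_mult_distr, Rinv_r, pow1 by lra; lra.
Qed.

Section CabOrbit.
Variables (A : CStarAlgebra) (a b : A).
Hypothesis a_unitary : unitary A a.

Definition cab_orbit (n : nat) : A := mul A (powA A (star A a) n) (Cab A a b n).

Lemma cab_orbit_succ n : cab_orbit (S n) =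
  add A (cab_orbit n) (opp A (mul A (mul A (star A a) (cab_orbit n)) b)).
Proof.
  unfold cab_orbit; rewrite Cab_succ, mulDr, mulrN; f_equal.
  - rewrite powA_Sr, <- mulA, (mulA A (star A a) a), (proj1 a_unitary), mul1l; reflexivity.
  - f_equal; simpl powA; rewrite !mulA; reflexivity.
Qed.

Lemma norm_cab_orbit_le n : norm A (cab_orbit n) <= norm A (Cab A a b n).
Proof. apply norm_mull_le, unitary_powA_norm_le1, unitary_star, a_unitary. Qed.

Lemma cab_orbit_0 : cab_orbit 0 = one A.
Proof. unfold cab_orbit; simpl powA; rewrite Cab_0; apply mul1l. Qed.

Lemma cab_orbit_1 : cab_orbit 1 = add A (one A) (opp A (mul A (star A a) b)).
Proof. rewrite cab_orbit_succ, cab_orbit_0, mul1r; reflexivity. Qed.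

End CabOrbit.

Theorem corollary3p2 (A : CStarAlgebra) (a b : A)
  (ha : unitary A a) (hb : unitary A b) :
  a = b <-> rho_is A a b 0.
Proof.
  split.
  - intros <-; apply is_limsup_eventually0; [intro; apply nroot_ge0|].
    exists 1%nat; intros [|n] Hn; [lia|].
    rewrite Cab_diag_succ, norm_zero; apply nroot_0.
  - intros [Hlim _].
    set (T x := mul A (mul A (star A a) x) b).
    assert (Hy1 : cab_orbit A a b 1 = zero A).
    { apply (orbit_succ0_eq0 A T).
      - intros x z; unfold T; rewrite mulDr, mulDl; reflexivity.
      - intros c x; unfold T; rewrite <- smul_mulr, <- smul_mull; reflexivity.
      - intro x; apply norm_unitary_conj; assumption.
      - apply cab_orbit_succ, ha.
      - rewrite cab_orbit_0; apply norm_one_le1.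
      - intros r Hr; destruct (nroot_limsup0_decay _ (fun n => norm_ge0 A _) Hlim r)
          as [N HN]; [lra|].
        exists N; eapply Rle_trans; [|exact HN].
        apply Rmult_le_compat_l; [apply pow_le; lra | apply norm_cab_orbit_le, ha]. }
    rewrite (cab_orbit_1 A a b ha) in Hy1; apply subr0_eq in Hy1.
    rewrite <- (mul1r A a), Hy1, mulA, (proj2 ha), mul1l; reflexivity.
Qed.
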